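(* Let $n$ and $a$ be positive integers with $n \equiv 0 \pmod 4$, $a \equiv 0 \pmod 4$, $0 < a < n$, and such that $p = \frac{a}{4} + \frac{n}{4}$ is a prime number. Let $$\Sigma = \{x = (x_1,\dots,x_n) : x_i \in \{-1,1\} \text{ for all } i,\ x_1 = 1,\ x_1+\dots+x_n = 0\}.$$ If $Q \subset \Sigma$ satisfies $|Q| > \sum_{i=0}^{p-1}\binom{n}{i}$, then there exist $x, y \in Q$ with $(x,y) = -a$, where $(\cdot,\cdot)$ is the standard inner product on $\mathbb{R}^n$. *)

From HB Require Import structures.
From mathcomp Require Import all_boot all_order all_algebra.
Set Implicit Arguments. Unset Strict Implicit. Unset Printing Implicit Defensive.
Import Order.TTheory GRing.Theory Num.Theory.

(* Vectors in Z^n (subset of R^n) indexed by 'I_n (coordinate i+1 is index i). *)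
Definition vec (n : nat) := {ffun 'I_n -> int}.

Definition ip (n : nat) (x y : vec n) : int := (\sum_(i < n) x i * y i)%R.

Definition inSigma (n : nat) (x : vec n) : Prop :=
  (forall i : 'I_n, x i = 1%R \/ x i = (-1)%R) /\
  (forall i : 'I_n, val i = 0%N -> x i = 1%R) /\
  (\sum_(i < n) x i)%R = 0%R.

From HB Require Import structures.
From mathcomp Require Import all_boot all_order all_algebra zify.
Import Order.TTheory GRing.Theory Num.Theory.
Set Implicit Arguments. Unset Strict Implicit. Unset Printing Implicit Defensive.

(* Write n = 4q, a = 4r, so p = q + r, and identify x in Sigma with its set of
   +1 coordinates, a 2q-subset of {1..n}; then (x, y) = 4 |A :&: B| - n, so
   (x, y) = -a exactly when |A :&: B| = 2q - p.  Put c = (p - 1)(2q + 1).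
   By Wilson's theorem C(t + c, p - 1) is nonzero mod p iff p divides 2q - t;
   this holds for t = 2q, and fails for every t < 2q except t = 2q - p.  So if Q
   avoids the inner product -a, the matrix (C(|A_i :&: A_j| + c, p - 1)) over
   F_p is diagonal and invertible.  By Vandermonde, t |-> C(t + c, p - 1) is a
   combination of the C(t, s) with s < p, so this matrix factors through the
   inclusion matrices of the subsets of size < p, whence |Q| <= sum_(i<p) C(n, i)
   (the Frankl-Wilson argument). *)

(* Among the p - 1 consecutive factors u, u - 1, ..., u - p + 2 a multiple of p
   is missing exactly when it would be u + 1. *)
Lemma prime_dvd_ffact_pred p u : prime p -> (p %| u ^_ p.-1) = ~~ (p %| u.+1).
Proof.
move=> p_pr; have p_gt0 := prime_gt0 p_pr.
rewrite ffact_prod (Euclid_dvd_prod _ _ _ p_pr) big_orE; apply/existsP/idP.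
- case=> -[i /= lt_i_p1] dvd_p_ui; apply/negP=> dvd_p_u1.
  have lt_i1_p : i.+1 < p by rewrite -ltn_predRL.
  have [le_u_i|lt_i_u] := leqP u i.
    by move: (dvdn_leq (ltn0Sn u) dvd_p_u1); rewrite leqNgt (leq_ltn_trans _ lt_i1_p).
  have := dvdn_sub dvd_p_u1 dvd_p_ui.
  rewrite subSn ?leq_subr // (subKn (ltnW lt_i_u)) => /(dvdn_leq (ltn0Sn _)).
  by rewrite leqNgt lt_i1_p.
- move=> ndvd_p_u1; have r_gt0 : 0 < u.+1 %% p by rewrite lt0n.
  have lt_r1_p1 : (u.+1 %% p).-1 < p.-1.
    by rewrite -ltnS !prednK // ltn_pmod.
  exists (Ordinal lt_r1_p1) => /=.
  rewrite -subSS prednK // {1}(divn_eq u.+1 p) addnK.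
  exact: dvdn_mull.
Qed.

Lemma prime_dvd_bin_pred p u : prime p -> (p %| 'C(u, p.-1)) = ~~ (p %| u.+1).
Proof.
move=> p_pr; rewrite -prime_dvd_ffact_pred // -bin_ffact Euclid_dvdM //.
suff -> : (p %| (p.-1)`!) = false by rewrite orbF.
apply/negP=> dvd_p_fact; have p_gt1 := prime_gt1 p_pr.
have : p %| (p.-1)`!.+1 by rewrite -(Wilson p_gt1).
by rewrite -addn1 dvdn_addr // dvdn1 => /eqP p1; rewrite p1 in p_gt1.
Qed.

(* The shift [c = (p - 1) (m + 1)] makes [t + c + 1] congruent to [t - m] modulo [p]. *)
Lemma dvdn_shifted_succ p m t : 0 < p -> t <= m ->
  (p %| (t + p.-1 * m.+1).+1) = (p %| m - t).
Proof.
move=> p_gt0 le_tm.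
have sumE : (t + p.-1 * m.+1).+1 + (m - t) = p * m.+1.
  by rewrite -[in RHS](prednK p_gt0) mulSn; lia.
apply/idP/idP=> dvd_p.
- by rewrite -(dvdn_addr _ dvd_p) sumE dvdn_mulr.
- by rewrite -(dvdn_addl _ dvd_p) sumE dvdn_mulr.
Qed.

Lemma Fp_bin_shifted_eq0 p m t : prime p -> t <= m ->
  ('C(t + p.-1 * m.+1, p.-1)%:R == 0 :> 'F_p)%R = ~~ (p %| m - t).
Proof.
move=> p_pr le_tm.
by rewrite -(dvdn_pcharf (pchar_Fp p_pr)) prime_dvd_bin_pred // dvdn_shifted_succ // prime_gt0.
Qed.

Local Open Scope ring_scope.

Lemma sum_subsets_card_leq (V : nmodType) (T : finType) (Z : {set T}) k (h : nat -> V) :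
  \sum_(S : {set T} | (S \subset Z) && (#|S| <= k)%N) h #|S|
    = \sum_(s < k.+1) h s *+ 'C(#|Z|, s).
Proof.
rewrite (partition_big (fun S : {set T} => inord #|S| : 'I_k.+1) predT) //=.
apply: eq_bigr => s _; rewrite -cards_draws -sumr_const.
apply: eq_big => [S|S /andP[/andP[_ le_Sk] /eqP <-]]; last by rewrite inordK.
rewrite inE -andbA; congr (_ && _).
have [le_Sk|lt_kS] := leqP #|S| k; first by rewrite -val_eqE /= inordK.
by apply/esym/negbTE; rewrite neq_ltn (leq_trans (ltn_ord s) lt_kS) orbT.
Qed.

Lemma unitmx_mulmx_leq (F : fieldType) m k (U : 'M[F]_(m, k)) (V : 'M[F]_(k, m)) :
  U *m V \in unitmx -> (m <= k)%N.
Proof.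
move=> unit_UV; rewrite -(mxrank_unit unit_UV).
exact: leq_trans (mxrankM_maxl U V) (rank_leq_col U).
Qed.

Section InclusionMatrices.

Variables (F : fieldType) (T : finType) (k : nat) (g : nat -> F).

Definition binom_poly (t : nat) : F := \sum_(s < k.+1) g s *+ 'C(t, s).

Lemma binom_poly_card_setI (A B : {set T}) :
  binom_poly #|A :&: B|
    = \sum_(S : {set T} | [&& S \subset A, S \subset B & (#|S| <= k)%N]) g #|S|.
Proof.
rewrite /binom_poly -sum_subsets_card_leq; apply: eq_bigl => S.
by rewrite subsetI andbA.
Qed.

Lemma card_sets_leq : #|[pred S : {set T} | (#|S| <= k)%N]| = (\sum_(s < k.+1) 'C(#|T|, s))%N.
Proof.
have := sum_subsets_card_leq [set: T] k (fun _ => 1%N).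
rewrite cardsT sumr_const natn; under eq_bigr do rewrite natn.
move=> <-; apply: eq_card => S.
by rewrite [RHS]unfold_in /= subsetT inE.
Qed.

Theorem binom_poly_intersection_bound m (A : 'I_m -> {set T}) :
  (forall i, binom_poly #|A i| != 0) ->
  (forall i j, i != j -> binom_poly #|A i :&: A j| = 0) ->
  (m <= \sum_(s < k.+1) 'C(#|T|, s))%N.
Proof.
move=> diag_neq0 offdiag_eq0.
pose small := [pred S : {set T} | (#|S| <= k)%N].
pose incl (S A : {set T}) : F := (S \subset A)%:R.
pose U := \matrix_(i < m, j < #|small|) (incl (enum_val j) (A i) * g #|enum_val j|).
pose V := \matrix_(j < #|small|, i < m) incl (enum_val j) (A i).
have UV_E i j : (U *m V) i j = binom_poly #|A i :&: A j|.
  rewrite mxE binom_poly_card_setI.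
  transitivity (\sum_(S in small) incl S (A i) * g #|S| * incl S (A j)).
    by rewrite (big_enum_val (A := small)); apply: eq_bigr => S _; rewrite !mxE.
  rewrite big_mkcond [RHS]big_mkcond; apply: eq_bigr => S _ /=.
  rewrite /incl inE.
  by case: (S \subset A i); case: (S \subset A j); case: (#|S| <= k)%N;
    rewrite ?mul1r ?mulr1 ?mul0r ?mulr0.
have UV_diag : U *m V = diag_mx (\row_i binom_poly #|A i|).
  apply/matrixP => i j; rewrite UV_E !mxE.
  by have [<-|/offdiag_eq0] := eqVneq i j; rewrite ?setIid ?mulr1n ?mulr0n.
have unit_UV : U *m V \in unitmx.
  rewrite UV_diag unitmxE det_diag unitfE; apply/prodf_neq0 => i _.
  by rewrite mxE.
by rewrite -card_sets_leq; apply: unitmx_mulmx_leq unit_UV.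
Qed.

End InclusionMatrices.

Lemma binom_poly_bin_shift (F : fieldType) k c t :
  binom_poly k (fun s => 'C(c, k - s)%:R : F) t = 'C(t + c, k)%:R.
Proof.
rewrite /binom_poly -binomial.Vandermonde natr_sum; apply: eq_bigr => s _.
by rewrite natrM mulr_natl.
Qed.

Definition plus_set n (x : vec n) : {set 'I_n} := [set i | x i == 1].

Lemma sum_mem_natr (R : nzSemiRingType) (T : finType) (A : {set T}) :
  \sum_(i : T) (i \in A)%:R = #|A|%:R :> R.
Proof.
by rewrite -sum1_card natr_sum [RHS]big_mkcond; apply: eq_bigr => i _; case: (i \in A).
Qed.

Lemma sigma_entry n (x : vec n) i : inSigma x -> x i = (i \in plus_set x)%:R *+ 2 - 1.
Proof. by move=> [x_pm1 _]; rewrite inE; case: (x_pm1 i) => ->. Qed.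

Lemma card_plus_set n (x : vec n) : inSigma x -> (#|plus_set x| * 2)%N = n.
Proof.
move=> x_Sigma; have [_ [_ /eqP]] := x_Sigma.
rewrite (eq_bigr _ (fun i _ => sigma_entry i x_Sigma)) sumrB sumrMnl sum_mem_natr.
by rewrite sumr_const card_ord subr_eq0 -mulrnA eqr_nat => /eqP.
Qed.

Lemma ip_sigma n (x y : vec n) : inSigma x -> inSigma y ->
  ip x y = (#|plus_set x :&: plus_set y| * 4)%N%:R - n%:R.
Proof.
move=> x_Sigma y_Sigma.
have entryM i : x i * y i = (i \in plus_set x :&: plus_set y)%:R *+ 4
    - (i \in plus_set x)%:R *+ 2 - (i \in plus_set y)%:R *+ 2 + 1.
  rewrite (sigma_entry i x_Sigma) (sigma_entry i y_Sigma) in_setI.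
  by case: (i \in plus_set x); case: (i \in plus_set y).
rewrite /ip (eq_bigr _ (fun i _ => entryM i)) big_split /= !sumrB !sumrMnl !sum_mem_natr.
by rewrite sumr_const card_ord -!mulrnA (card_plus_set x_Sigma) (card_plus_set y_Sigma) subrK.
Qed.

Lemma card_plus_setI_lt n (x y : vec n) : inSigma x -> inSigma y -> x != y ->
  (#|plus_set x :&: plus_set y| < #|plus_set x|)%N.
Proof.
move=> x_Sigma y_Sigma; rewrite ltnNge; apply: contra => le_x_xy.
have sub_xy : plus_set x \subset plus_set y.
  by apply/setIidPl/eqP; rewrite eqEcard subsetIl.
have eq_xy : plus_set x = plus_set y.
  apply/eqP; rewrite eqEcard sub_xy -(leq_pmul2r (isT : 0 < 2)%N).
  by rewrite (card_plus_set x_Sigma) (card_plus_set y_Sigma) leqnn.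
by apply/eqP; apply/ffunP => i; rewrite (sigma_entry i x_Sigma) (sigma_entry i y_Sigma) eq_xy.
Qed.

Lemma ip_sigma_eq_opp n a (x y : vec n) : inSigma x -> inSigma y ->
  (#|plus_set x :&: plus_set y| * 4 + a)%N = n -> ip x y = - a%:Z.
Proof.
move=> x_Sigma y_Sigma card_n; rewrite (ip_sigma x_Sigma y_Sigma).
have -> : n%:R = (#|plus_set x :&: plus_set y| * 4)%N%:R + a%:R :> int.
  by rewrite -natrD card_n.
by rewrite opprD addrA subrr add0r natz.
Qed.

Lemma ndvdn_lt_double p d : (0 < d)%N -> (d < p.*2)%N -> d != p -> ~~ (p %| d)%N.
Proof.
move=> d_gt0 lt_d_2p neq_dp; apply/negP => /dvdnP[k d_eq].
by move: d_eq d_gt0 lt_d_2p neq_dp => ->; case: k => [|[|k]]; rewrite ?mulSn; lia.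
Qed.

Lemma ndvdn_sub_card_plus_setI n a q r (x y : vec n) :
  n = (q * 4)%N -> a = (r * 4)%N -> (0 < r)%N -> inSigma x -> inSigma y -> x != y ->
  ip x y != - a%:Z -> ~~ (r + q %| q * 2 - #|plus_set x :&: plus_set y|)%N.
Proof.
move=> nE aE r_gt0 x_Sigma y_Sigma neq_xy ip_neq.
have card_x : #|plus_set x| = (q * 2)%N.
  by have := card_plus_set x_Sigma; lia.
have lt_xy_x := card_plus_setI_lt x_Sigma y_Sigma neq_xy; rewrite card_x in lt_xy_x.
apply: ndvdn_lt_double; [by rewrite subn_gt0 | lia |].
by apply: contra_neq ip_neq => eq_p; apply: ip_sigma_eq_opp => //; lia.
Qed.

Local Close Scope ring_scope.

Theorem mainTheorem5 (n a p : nat) :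
  (0 < n)%N -> (0 < a)%N -> (n %% 4 = 0)%N -> (a %% 4 = 0)%N -> (a < n)%N ->
  p = (a %/ 4 + n %/ 4)%N -> prime p ->
  forall Q : seq (vec n),
    uniq Q -> (forall x, x \in Q -> inSigma x) ->
    (\sum_(0 <= i < p) 'C(n, i) < size Q)%N ->
    exists x y, x \in Q /\ y \in Q /\ ip x y = (- (a%:Z))%R.
Proof.
move=> _ a_gt0 n4 a4 _ pE p_pr Q uniqQ Q_Sigma.
have [/hasP[x xQ /hasP[y yQ /eqP ip_xy]] _|no_pair] :=
  boolP (has (fun x => has (fun y => ip x y == (- a%:Z)%R) Q) Q); first by exists x, y.
rewrite ltnNge => /negP[].
set q := n %/ 4; set r := a %/ 4.
have nE : n = q * 4 by rewrite {1}(divn_eq n 4) n4 addn0.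
have aE : a = r * 4 by rewrite {1}(divn_eq a 4) a4 addn0.
have r_gt0 : 0 < r by move: a_gt0; rewrite aE muln_gt0 => /andP[].
pose x0 : vec n := [ffun => 0%R].
pose A (i : 'I_(size Q)) := plus_set (nth x0 Q i).
have Qi_Sigma (i : 'I_(size Q)) : inSigma (nth x0 Q i) by apply/Q_Sigma/mem_nth.
have cardA i : #|A i| = q * 2.
  by have := card_plus_set (Qi_Sigma i); rewrite /A; lia.
pose c := p.-1 * (q * 2).+1.
have := @binom_poly_intersection_bound 'F_p _ p.-1 (fun s => 'C(c, p.-1 - s)%:R%R) _ A.
rewrite big_mkord card_ord prednK ?prime_gt0 //.
apply=> [i|i j neq_ij]; rewrite binom_poly_bin_shift.
  by rewrite cardA Fp_bin_shifted_eq0 // subnn dvdn0.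
have le_ij_i : #|A i :&: A j| <= q * 2 by rewrite -(cardA i) subset_leq_card ?subsetIl.
apply/eqP; rewrite Fp_bin_shifted_eq0 // pE.
apply: (@ndvdn_sub_card_plus_setI n a q r) => //; first by rewrite nth_uniq.
apply: contraNneq no_pair => ip_ij; apply/hasP; exists (nth x0 Q i); first exact: mem_nth.
by apply/hasP; exists (nth x0 Q j); [exact: mem_nth | apply/eqP].
Qed.
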